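(* Let $a,b$ be non-negative integers and $c=1$ such that $x^3-ax^2-bx-c$ has exactly one real root $\eta_1$, with $\eta_1>1$, and non-real roots $\eta_2$, $\eta_3=\overline{\eta_2}$. Let $\psi_2,\zeta_2$ be the complex constants such that for every $n\ge 3$ and all $k,l$, every sequence $\langle x_i\rangle_{i=1}^n$ satisfying $x_{i+3}=ax_{i+2}+bx_{i+1}+cx_i$ with $x_n=0$, $x_{n-1}=k$, $x_{n-2}=l$ is given by $x_i=\sum_{j=1}^3(k\psi_j+l\zeta_j)\eta_j^{n-i}$ for some constants $\psi_1,\zeta_1$ and $\psi_3=\overline{\psi_2}$, $\zeta_3=\overline{\zeta_2}$. For integers $k,l$ with $k\psi_2+l\zeta_2\neq 0$, let $\gamma(k,l)\in[0,2\pi)$ be the argument of $k\psi_2+l\zeta_2$. Then for any real $x<y$ with $[x,y]\subseteq[0,2\pi]$, there exist non-zero integers $k,l$ with $k\psi_2+l\zeta_2\neq0$ and $x<\gamma(k,l)<y$.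
   Context: The roots of the polynomial are distinct, so the constants $\psi_j,\zeta_j$ are uniquely determined by the polynomial. *)

From HB Require Import structures.
From mathcomp Require Import all_boot all_order all_algebra.
From mathcomp Require Import all_classical all_reals all_analysis.
From mathcomp Require Import complex.
Set Implicit Arguments. Unset Strict Implicit. Unset Printing Implicit Defensive.
Import Order.TTheory GRing.Theory Num.Theory.
Local Open Scope ring_scope.

Definition cubic (R : rcfType) (a b c : R) : {poly R[i]} :=
  'X^3 - (a%:C)%C *: 'X^2 - (b%:C)%C *: 'X - ((c%:C)%C)%:P.

Definition etas (R : rcfType) (e1 : R) (e2 : R[i]) (j : 'I_3) : R[i] :=
  if val j == 0%N then (e1%:C)%C else if val j == 1%N then e2 else (e2^*)%C.

(* The sequence x_i = sum_j (k psi_j + l zeta_j) eta_j^(n-i), written in the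
   variable m = n - i.  It has x_n = 0, x_{n-1} = k, x_{n-2} = l iff these
   equations hold for m = 0,1,2; this determines psi, zeta uniquely. *)
Definition closed_form (R : rcfType) (e1 : R) (e2 : R[i])
  (psi zeta : 'I_3 -> R[i]) (k l : R[i]) (m : nat) : R[i] :=
  \sum_(j < 3) (k * psi j + l * zeta j) * etas e1 e2 j ^+ m.

Definition is_arg (R : realType) (z : R[i]) (g : R) : Prop :=
  0 <= g < 2 * pi /\ complex.Re z = Num.sqrt (complex.Re z ^+ 2 + complex.Im z ^+ 2) * cos g /\ complex.Im z = Num.sqrt (complex.Re z ^+ 2 + complex.Im z ^+ 2) * sin g.

From HB Require Import structures.
From mathcomp Require Import all_boot all_order all_algebra.
From mathcomp Require Import all_classical all_reals all_analysis.
From mathcomp Require Import complex.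
From mathcomp Require Import ring lra.
Import Order.TTheory GRing.Theory Num.Theory Normc.
Local Open Scope ring_scope.
Local Open Scope complex_scope.

(* Only the non-reality of eta_2 matters.  Eliminating the closed form at
   n - i = 0, 1, 2 gives zeta_2 (eta_2 - eta_1)(eta_2 - conj eta_2) = 1 and
   psi_2 = -(eta_1 + conj eta_2) zeta_2, so psi_2 / zeta_2 is not real and
   Z psi_2 + Z zeta_2 is a lattice in C.  Rounding real coordinates away from 0,
   every point of C lies within |psi_2| + |zeta_2| of a lattice point with both
   coordinates nonzero; near T e^(it) with T large such points have direction
   close to e^(it).  In the upper half-plane the argument is
   acos (Re w / |w|), and complex conjugation handles the lower half-plane. *)

Local Notation Re := complex.Re.
Local Notation Im := complex.Im.

Lemma round_nonzero {R : archiRealFieldType} (s : R) :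
  exists2 k : int, k != 0 & `|k%:~R - s| <= 1.
Proof.
have [s0|s_neq0] := eqVneq (Num.floor s) 0.
  exists 1 => //; move: s0 => /eqP; rewrite floor_eq add0r => /andP[s_ge0 s_lt1].
  by rewrite ler_norml; apply/andP; split; lra.
exists (Num.floor s) => //; have := floor_itv s; rewrite intrD => /andP[lo hi].
by rewrite ler_norml; apply/andP; split; lra.
Qed.

Section ComplexNorm.
Context {R : rcfType}.
Implicit Types (r : R) (z w : R[i]).

Lemma normc_ReIm z : normc z = Num.sqrt (Re z ^+ 2 + Im z ^+ 2).
Proof. by case: z. Qed.

Lemma normc_ge0 z : 0 <= normc z.
Proof. by rewrite normc_ReIm sqrtr_ge0. Qed.

Lemma normc_sqr z : normc z ^+ 2 = Re z ^+ 2 + Im z ^+ 2.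
Proof. by rewrite normc_ReIm sqr_sqrtr // addr_ge0 ?sqr_ge0. Qed.

Lemma normc_real r : normc r%:C = `|r|.
Proof. by rewrite normc_ReIm /= expr0n addr0 sqrtr_sqr. Qed.

Lemma normc_scale r z : normc (r%:C * z) = `|r| * normc z.
Proof. by rewrite normcM normc_real. Qed.

Lemma Re_scale r z : Re (r%:C * z) = r * Re z.
Proof. by case: z => a b /=; rewrite mul0r subr0. Qed.

Lemma Im_scale r z : Im (r%:C * z) = r * Im z.
Proof. by case: z => a b /=; rewrite mul0r addr0. Qed.

Lemma normc_ge_Re z : `|Re z| <= normc z.
Proof.
by rewrite normc_ReIm -sqrtr_sqr ler_sqrt ?addr_ge0 ?sqr_ge0 // lerDl sqr_ge0.
Qed.

Lemma normc_ge_Im z : `|Im z| <= normc z.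
Proof.
by rewrite normc_ReIm -sqrtr_sqr ler_sqrt ?addr_ge0 ?sqr_ge0 // lerDr sqr_ge0.
Qed.

Lemma normc_dist z w : `|normc z - normc w| <= normc (z - w).
Proof. exact: (@ler_dist_dist _ (Rcomplex R)). Qed.

Lemma near_ray_direction u w (T M : R) : normc u = 1 ->
  normc (w - T%:C * u) <= M -> M < T ->
  0 < normc w /\ T * normc ((normc w)^-1%:C * w - u) <= 2 * M.
Proof.
move=> u1 wTu MT.
have M_ge0 : 0 <= M := le_trans (normc_ge0 _) wTu.
have Tu : normc (T%:C * u) = T by rewrite normc_scale u1 mulr1 ger0_norm //; lra.
have dist : `|normc w - T| <= M.
  by rewrite -Tu; exact: le_trans (normc_dist _ _) wTu.
have w_gt0 : 0 < normc w by move: dist; rewrite ler_norml => /andP[]; lra.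
split => //; set n := normc w.
have -> : T * normc (n^-1%:C * w - u) =
           normc ((w - T%:C * u) + ((T - n) / n)%:C * w).
  rewrite -[T in LHS]ger0_norm -?normc_scale; last lra.
  congr normc; rewrite rmorphM rmorphB fmorphV /=.
  by field; apply/eqP => -[] /eqP; rewrite gt_eqF.
apply: (le_trans (le_normcD _ _)).
rewrite normc_scale normrM normfV (gtr0_norm w_gt0) mulfVK ?gt_eqF // distrC.
lra.
Qed.

End ComplexNorm.

Section Lattice.
Context {R : rcfType}.
Implicit Types (p z u v w : R[i]) (k l : int).

Definition cross p z : R := Re p * Im z - Re z * Im p.

Definition lattice_pt p z k l : R[i] := k%:~R * p + l%:~R * z.

Lemma cross_conj p z : cross p^* z^* = - cross p z.
Proof. by case: p => a b; case: z => c d; rewrite /cross /=; ring. Qed.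

Lemma cross_mull q z : cross (q * z) z = - Im q * (Re z ^+ 2 + Im z ^+ 2).
Proof. by case: q => a b; case: z => c d; rewrite /cross /=; ring. Qed.

Lemma cross_mull_neq0 q z : Im q != 0 -> z != 0 -> cross (q * z) z != 0.
Proof.
move=> Imq_neq0 z_neq0; rewrite cross_mull mulf_neq0 ?oppr_eq0 //.
by rewrite -normc_sqr sqrf_eq0; apply: contra z_neq0 => /eqP/eq0_normc ->.
Qed.

Lemma lattice_pt_conj p z k l : (lattice_pt p z k l)^* = lattice_pt p^* z^* k l.
Proof. by rewrite /lattice_pt rmorphD !rmorphM !rmorph_int. Qed.

End Lattice.

Lemma lattice_pt_near {R : realType} (p z v : R[i]) : cross p z != 0 ->
  exists k l : int, [/\ k != 0, l != 0 &
    normc (lattice_pt p z k l - v) <= normc p + normc z].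
Proof.
move=> pz_neq0.
have v_coord :
    v = (cross v z / cross p z)%:C * p + (cross p v / cross p z)%:C * z.
  move: pz_neq0; rewrite /cross.
  case: p => a b; case: z => c d; case: v => e f /= pz_neq0.
  by apply/eqP; rewrite eq_complex /=; apply/andP; split; apply/eqP; field.
set s := cross v z / _ in v_coord; set t := cross p v / _ in v_coord.
have [k k_neq0 ks] := round_nonzero s; have [l l_neq0 lt] := round_nonzero t.
exists k, l; split => //.
have -> : lattice_pt p z k l - v = (k%:~R - s)%:C * p + (l%:~R - t)%:C * z.
  by rewrite /lattice_pt v_coord !rmorphB /= !rmorph_int; ring.
apply: (le_trans (le_normcD _ _)); rewrite !normc_scale.
by apply: lerD; apply: ler_piMl; rewrite ?normc_ge0.
Qed.

Section Argument.
Context {R : realType}.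
Implicit Types (w : R[i]) (g x y c : R).

Lemma acos_between x y c : 0 <= x -> x <= y -> y <= pi ->
  cos y < c < cos x -> x < acos c < y.
Proof.
move=> x_ge0 xy y_lepi /andP[cy_lt cx_gt].
have c_itv : -1 <= c <= 1.
  apply/andP; split; first exact: le_trans (cos_geN1 _) (ltW cy_lt).
  exact: le_trans (ltW cx_gt) (cos_le1 _).
have acos_itv : acos c \in `[0, pi] by rewrite in_itv /= acos_ge0 ?acos_lepi.
have x_itv : x \in `[0, pi] by rewrite in_itv /= x_ge0 (le_trans xy).
have y_itv : y \in `[0, pi] by rewrite in_itv /= y_lepi (le_trans x_ge0).
rewrite -(ltr_cos x_itv acos_itv) -(ltr_cos acos_itv y_itv).
by rewrite acosK ?in_itv // cx_gt cy_lt.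
Qed.

Lemma is_arg_acos w : 0 < Im w -> is_arg w (acos (Re w / normc w)).
Proof.
move=> Imw_gt0; have n_gt0 : 0 < normc w.
  by apply: lt_le_trans (normc_ge_Im w); rewrite gtr0_norm.
set n := normc w; set c := Re w / n.
have c_itv : -1 <= c <= 1.
  rewrite -ler_norml /c normf_div (gtr0_norm n_gt0) ler_pdivrMr //.
  by rewrite mul1r normc_ge_Re.
rewrite /is_arg -normc_ReIm -/n; split; last split.
- rewrite acos_ge0 //=; apply: le_lt_trans (acos_lepi c_itv) _.
  by rewrite ltr_pMl ?pi_gt0 ?ltr1n.
- by rewrite acosK ?in_itv // /c mulrC divfK ?gt_eqF.
have -> : n * sin (acos c) = Num.sqrt (n ^+ 2 * (1 - c ^+ 2)).
  by rewrite sin_acos // sqrtrM ?sqr_ge0 // sqrtr_sqr gtr0_norm.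
have -> : n ^+ 2 * (1 - c ^+ 2) = Im w ^+ 2.
  rewrite /c expr_div_n mulrBr mulr1 mulrCA divff ?mulr1 ?expf_neq0 ?gt_eqF //.
  by rewrite /n normc_sqr addrC addKr.
by rewrite sqrtr_sqr gtr0_norm.
Qed.

Lemma is_arg_conj w g : 0 < g -> is_arg w g -> is_arg w^* (2 * pi - g).
Proof.
case: w => a b g_gt0; rewrite /is_arg /= sqrrN.
move=> -[/andP[_ g_lt2pi] [a_cos b_sin]].
rewrite cosB sinB mulr_natl cos2pi sin2pi; split; first by apply/andP; split; lra.
by rewrite !mul1r !mul0r addr0 sub0r mulrN -b_sin.
Qed.

End Argument.

Section LatticeArguments.
Context {R : realType}.
Implicit Types (p z u : R[i]) (x y e : R).

Definition lattice_arg_in p z x y : Prop :=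
  exists k l : int, [/\ k != 0, l != 0, lattice_pt p z k l != 0 &
    exists g, is_arg (lattice_pt p z k l) g /\ x < g < y].

Lemma lattice_direction_dense p z u e :
  cross p z != 0 -> normc u = 1 -> 0 < e ->
  exists k l, [/\ k != 0, l != 0, 0 < normc (lattice_pt p z k l) &
    normc ((normc (lattice_pt p z k l))^-1%:C * lattice_pt p z k l - u) < e].
Proof.
move=> pz_neq0 u1 e_gt0; set M := normc p + normc z.
have M_ge0 : 0 <= M by rewrite addr_ge0 ?normc_ge0.
pose T := M + (2 * M + 1) / e.
have MT : M < T by rewrite ltrDl divr_gt0 //; lra.
have [k [l [k_neq0 l_neq0 near]]] := @lattice_pt_near _ p z (T%:C * u) pz_neq0.
have [w_gt0 dir] := near_ray_direction _ _ _ _ u1 near MT.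
exists k, l; split => //; rewrite -(ltr_pM2l (le_lt_trans M_ge0 MT)).
apply: le_lt_trans dir _.
have -> : T * e = M * e + (2 * M + 1) by rewrite /T; field; rewrite gt_eqF.
by move: (mulr_ge0 M_ge0 (ltW e_gt0)); rewrite /M; lra.
Qed.

Lemma lattice_arg_upper p z x y : cross p z != 0 ->
  0 <= x -> x < y -> y <= pi -> lattice_arg_in p z x y.
Proof.
move=> pz_neq0 x_ge0 xy y_lepi; set t := (x + y) / 2.
have t_itv : x < t < y by apply/andP; split; rewrite /t; lra.
have sint_gt0 : 0 < sin t by apply: sin_gt0_pi; apply/andP; split; rewrite /t; lra.
have cos_xt : cos t < cos x.
  by rewrite ltr_cos ?in_itv /= ?x_ge0 ?(ltW (andP t_itv).1) //; lra.
have cos_ty : cos y < cos t.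
  by rewrite ltr_cos ?in_itv /= ?y_lepi ?(ltW (andP t_itv).2) //; lra.
pose u := cos t +i* sin t.
have u1 : normc u = 1 by rewrite normc_ReIm /= cos2Dsin2 sqrtr1.
pose d := Num.min (cos x - cos t) (Num.min (cos t - cos y) (sin t)).
have d_gt0 : 0 < d by rewrite !lt_min !subr_gt0 cos_xt cos_ty sint_gt0.
have [k [l [k_neq0 l_neq0 n_gt0 close]]] :=
  lattice_direction_dense p z u d pz_neq0 u1 d_gt0.
set w := lattice_pt p z k l in n_gt0 close *; set n := normc w in n_gt0 close.
have Re_close : `|Re w / n - cos t| < d.
  apply: le_lt_trans close; apply: le_trans (normc_ge_Re _).
  by rewrite raddfB /= Re_scale mulrC.
have Im_close : `|Im w / n - sin t| < d.
  apply: le_lt_trans close; apply: le_trans (normc_ge_Im _).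
  by rewrite raddfB /= Im_scale mulrC.
have [d_le1 d_le2 d_le3] :
    [/\ d <= cos x - cos t, d <= cos t - cos y & d <= sin t].
  by rewrite /d !ge_min !lexx !orbT.
move: Re_close Im_close; rewrite !ltr_norml => /andP[Re_lo Re_hi] /andP[Im_lo _].
have Imw_gt0 : 0 < Im w.
  by rewrite -(divfK (lt0r_neq0 n_gt0) (Im w)); apply: mulr_gt0 => //; lra.
exists k, l; split => //.
  by apply: contraTneq Imw_gt0; rewrite /w => ->; rewrite ltxx.
exists (acos (Re w / n)); split; first exact: is_arg_acos.
by apply: acos_between; rewrite ?x_ge0 ?(ltW xy) //; apply/andP; split; lra.
Qed.

Lemma lattice_arg_in_conj p z x y : 0 <= x ->
  lattice_arg_in p^* z^* x y -> lattice_arg_in p z (2 * pi - y) (2 * pi - x).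
Proof.
move=> x_ge0 [k [l [k_neq0 l_neq0 w_neq0 [g [arg_g /andP[xg gy]]]]]].
have w_conj : lattice_pt p z k l = (lattice_pt p^* z^* k l)^*.
  by rewrite lattice_pt_conj !conjcK.
exists k, l; rewrite w_conj conjc_eq0; split => //.
exists (2 * pi - g); split; first by apply: is_arg_conj => //; lra.
by apply/andP; split; lra.
Qed.

Lemma lattice_arg_dense p z x y : cross p z != 0 ->
  0 <= x -> x < y -> y <= 2 * pi -> lattice_arg_in p z x y.
Proof.
move=> pz_neq0 x_ge0 xy y_le2pi.
have [y_lepi|pi_lty] := lerP y pi; first exact: lattice_arg_upper.
have [pi_lex|x_ltpi] := lerP pi x.
  rewrite -[x in lattice_arg_in _ _ x](subKr (2 * pi)).
  rewrite -[y in lattice_arg_in _ _ _ y](subKr (2 * pi)).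
  apply: lattice_arg_in_conj; first lra.
  by apply: lattice_arg_upper; rewrite ?cross_conj ?oppr_eq0 //; lra.
have [k [l [k_neq0 l_neq0 w_neq0 [g [arg_g /andP[xg g_ltpi]]]]]] :
  lattice_arg_in p z x pi by apply: lattice_arg_upper.
by exists k, l; split => //; exists g; split => //; apply/andP; split; lra.
Qed.

End LatticeArguments.

Lemma sum3_vanishing_quadratic {F : comPzRingType} (w eta : 'I_3 -> F) :
  let S m := \sum_(j < 3) w j * eta j ^+ m in
  S 2%N - (eta ord0 + eta ord_max) * S 1%N + eta ord0 * eta ord_max * S 0%N =
  w (inord 1) * ((eta (inord 1) - eta ord0) * (eta (inord 1) - eta ord_max)).
Proof.
(* the weights of (X - eta_0)(X - eta_2) kill every term but j = 1 *)
rewrite /= !big_ord_recl !big_ord0.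
have -> : lift ord0 ord0 = inord 1 :> 'I_3 by apply: val_inj; rewrite /= inordK.
have -> : lift ord0 (lift ord0 ord0) = ord_max :> 'I_3 by apply: val_inj.
ring.
Qed.

Section ClosedForm.
Context {R : rcfType} {e1 : R} {e2 : R[i]} {psi zeta : 'I_3 -> R[i]}.
Hypothesis closed_form_init : forall k l : R[i],
  [/\ closed_form e1 e2 psi zeta k l 0 = 0,
      closed_form e1 e2 psi zeta k l 1 = k &
      closed_form e1 e2 psi zeta k l 2 = l].

Let D := (e2 - e1%:C) * (e2 - e2^*).

Lemma closed_form_coef (k l : R[i]) :
  (k * psi (inord 1) + l * zeta (inord 1)) * D = l - (e1%:C + e2^*) * k.
Proof.
have [x0 x1 x2] := closed_form_init k l; rewrite /closed_form in x0 x1 x2.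
move: (sum3_vanishing_quadratic (fun j => k * psi j + l * zeta j) (etas e1 e2)).
rewrite /= x0 x1 x2 /etas /= inordK //= => <-; ring.
Qed.

Lemma closed_form_psi_zeta :
  zeta (inord 1) != 0 /\ psi (inord 1) = - (e1%:C + e2^*) * zeta (inord 1).
Proof.
have zetaD : zeta (inord 1) * D = 1.
  by have := closed_form_coef 0 1; rewrite !mul0r !mul1r add0r mulr0 subr0.
have psiD : psi (inord 1) * D = - (e1%:C + e2^*).
  by have := closed_form_coef 1 0; rewrite !mul1r !mul0r addr0 mulr1 sub0r.
split; first by apply: contra_eq_neq zetaD => ->; rewrite mul0r eq_sym oner_neq0.
by rewrite -[LHS]mulr1 -zetaD mulrCA -psiD mulrC.
Qed.

End ClosedForm.

Theorem corollary3 (R : realType) (a b : nat) (eta1 : R) (eta2 : R[i])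
    (psi zeta : 'I_3 -> R[i]) :
  let c : R := 1 in
  (* roots of x^3 - a x^2 - b x - c are exactly eta1 (real), eta2, conj eta2 *)
  (forall z : R[i], root (cubic a%:R b%:R c) z =
     [|| z == (eta1%:C)%C, z == eta2 | z == (eta2^*)%C]) ->
  complex.Im eta2 != 0 ->
  1 < eta1 ->
  (* psi, zeta: the constants of the closed form with x_n = 0, x_{n-1} = k,
     x_{n-2} = l, for all k, l *)
  (forall k l : R[i],
     [/\ closed_form eta1 eta2 psi zeta k l 0 = 0,
         closed_form eta1 eta2 psi zeta k l 1 = k &
         closed_form eta1 eta2 psi zeta k l 2 = l]) ->
  forall x y : R, x < y -> 0 <= x -> y <= 2 * pi ->
  exists k l : int, [/\ k != 0, l != 0,
    k%:~R * psi (inord 1) + l%:~R * zeta (inord 1) != 0 &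
    exists g : R, is_arg (k%:~R * psi (inord 1) + l%:~R * zeta (inord 1)) g
                  /\ x < g < y].
Proof.
move=> c _ Im_eta2 _ closed_form_init x y xy x_ge0 y_le2pi.
have [zeta_neq0 psi_eq] := closed_form_psi_zeta closed_form_init.
have Im_q : Im (- (eta1%:C + eta2^*)) = Im eta2.
  by case: (eta2) => u v /=; rewrite add0r opprK.
by apply: lattice_arg_dense => //; rewrite psi_eq cross_mull_neq0 ?Im_q.
Qed.
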